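(* For all $n\ge0$, $$F_{2n}(x,y,q)=\sum_{k=0}^nx^{n-k}y^kq^{\binom{n+k}2-nk}\begin{bmatrix}n\\k\end{bmatrix}_qF_{n-k}(xq^{n+k},yq^{n+k},q).$$
   Context: $\Pi_n(13/2,123)$ is the set of layered matchings of $[n]$: set partitions whose blocks are consecutive intervals $[1,i_1]/\dots/[i_{k-1}+1,n]$, each of size $1$ or $2$. $\Pi_0(13/2,123)$ consists of the empty partition. For $\pi=B_1/\dots/B_k$ with $\min B_1<\dots<\min B_k$, $rb(\pi)$ is the number of pairs $(b,B_j)$ with $b\in B_i$, $j>i$, $\max B_j>b$. Let $s(\pi)$ and $d(\pi)$ be the numbers of blocks of size $1$ and $2$. Define $F_n(x,y,q)=\sum_{\pi\in\Pi_n(13/2,123)}x^{s(\pi)}y^{d(\pi)}q^{rb(\pi)}$. $F_n(xq^a,yq^a,q)$ denotes the substitution $x\mapsto xq^a$, $y\mapsto yq^a$. The $q$-binomial coefficient is $\begin{bmatrix}n\\k\end{bmatrix}_q=\prod_{i=1}^k\frac{q^{n-i+1}-1}{q^i-1}$ for $0\le k\le n$. *)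

From HB Require Import structures.
From mathcomp Require Import all_boot all_order all_algebra.
Set Implicit Arguments. Unset Strict Implicit. Unset Printing Implicit Defensive.
Import Order.TTheory GRing.Theory Num.Theory.

(* A set partition of [n] is represented as the list of its blocks B_1,...,B_k
   ordered by increasing minima, each block a list of its elements. *)

Fixpoint interval_blocks (start : nat) (c : seq nat) : seq (seq nat) :=
  match c with
  | [::] => [::]
  | a :: c' => iota start a :: interval_blocks (start + a) c'
  end.

(* Layered matching of [n] = {1..n} encoded by a tuple of booleans:
   [true] = block of size 2, [false] = block of size 1. *)
Definition part_size (b : bool) : nat := if b then 2 else 1.

Definition layered_blocks (t : seq bool) : seq (seq nat) :=
  interval_blocks 1 (map part_size t).

Fixpoint rb (bs : seq (seq nat)) : nat :=
  match bs with
  | [::] => 0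
  | B :: bs' =>
      (\sum_(b <- B) count (fun Bj => b < \max_(x <- Bj) x) bs') + rb bs'
  end.

Definition nsingle (bs : seq (seq nat)) : nat := count (fun B => size B == 1) bs.
Definition ndouble (bs : seq (seq nat)) : nat := count (fun B => size B == 2) bs.

Local Open Scope ring_scope.

(* F_n(x,y,q) = sum over layered matchings pi of [n] of x^s y^d q^rb.
   Layered matchings with k blocks correspond to k-tuples of part sizes in {1,2}
   summing to n. *)
Definition F {R : comPzRingType} (n : nat) (x y q : R) : R :=
  \sum_(k < n.+1) \sum_(t : k.-tuple bool | sumn (map part_size t) == n)
     x ^+ nsingle (layered_blocks t) * y ^+ ndouble (layered_blocks t)
       * q ^+ rb (layered_blocks t).

Definition qbinom {R : fieldType} (n k : nat) (q : R) : R :=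
  \prod_(1 <= i < k.+1) ((q ^+ (n - i + 1) - 1) / (q ^+ i - 1)).

(* A layered matching is a word over the block sizes {1,2}.  If its block
   sizes are c_1,...,c_r, every element of block i lies below the maximum of
   every later block, so rb = sum_i c_i (r - i).  Splitting off the first block
   therefore multiplies the remaining weight by a power of q, which gives the
   two-term recursion
     F_{N+2}(x,y) = x F_{N+1}(xq,yq) + y F_N(xq^2,yq^2).
   Iterating it n times (for n <= m) yields the expansion
     F_{n+m}(x,y) = sum_k x^(n-k) y^k q^(C(n,2)+C(k,2)) G(n,k) F_{m-k}(xq^(n+k),yq^(n+k)),
   where G(n,k) is the Gaussian binomial defined by the q-Pascal rule.  When
   q^i <> 1 for 0 < i <= n, G(n,k) agrees with the product formula qbinom, and
   the theorem is the case m = n, using C(n+k,2) = C(n,2) + C(k,2) + nk. *)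

From HB Require Import structures.
From mathcomp Require Import all_boot all_order all_algebra.
From mathcomp Require Import ring zify.
Import GRing.Theory.
Local Open Scope ring_scope.

(* The rb statistic of a set partition into consecutive intervals of sizes c:
   each element of block i is below the maximum of each later block. *)
Fixpoint rb_comp (c : seq nat) : nat :=
  if c is a :: c' then (a * size c' + rb_comp c')%N else 0%N.

Lemma count_blocks_above (s b : nat) (c : seq nat) :
  (b < s)%N -> all (fun a => 0 < a)%N c ->
  count (fun B => b < \max_(x <- B) x)%N (interval_blocks s c) = size c.
Proof.
elim: c s => [|a c IH] s //= hbs /andP[ha hc].
rewrite (IH (s + a)%N) ?(leq_trans hbs) ?leq_addr //.
have s_in : s \in iota s a by rewrite mem_iota; lia.
exact: (@leq_bigmax_seq nat _ xpredT id s s_in).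
Qed.

Lemma rb_interval_blocks (s : nat) (c : seq nat) :
  all (fun a => 0 < a)%N c -> rb (interval_blocks s c) = rb_comp c.
Proof.
elim: c s => [|a c IH] s //= /andP[_ hc].
rewrite IH // (eq_big_seq (fun _ => size c)); last first.
  by move=> b; rewrite mem_iota => /andP[_ hb]; apply: count_blocks_above.
by rewrite big_const_seq count_predT size_iota iter_addn_0 mulnC.
Qed.

Lemma nsingle_layered (t : seq bool) :
  nsingle (layered_blocks t) = count negb t.
Proof.
rewrite /layered_blocks; elim: t 1%N => [|b t IH] s //=.
by rewrite size_iota IH; case: b.
Qed.

Lemma ndouble_layered (t : seq bool) :
  ndouble (layered_blocks t) = count id t.
Proof.
rewrite /layered_blocks; elim: t 1%N => [|b t IH] s //=.
by rewrite size_iota IH; case: b.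
Qed.

Lemma binS2 (n : nat) : 'C(n.+1, 2) = ('C(n, 2) + n)%N.
Proof. by rewrite binS bin1. Qed.

Lemma binD2 (n k : nat) : 'C(n + k, 2) = ('C(n, 2) + 'C(k, 2) + n * k)%N.
Proof.
elim: k => [|k IH]; first by rewrite addn0 muln0 bin0n !addn0.
by rewrite addnS !binS2 IH mulnS; lia.
Qed.

Section Recursion.
Context {R : comPzRingType}.

Definition weight (q x y : R) (t : seq bool) : R :=
  x ^+ nsingle (layered_blocks t) * y ^+ ndouble (layered_blocks t)
    * q ^+ rb (layered_blocks t).

Lemma weightE (q x y : R) (t : seq bool) :
  weight q x y t =
  x ^+ count negb t * y ^+ count id t * q ^+ rb_comp (map part_size t).
Proof.
rewrite /weight nsingle_layered ndouble_layered /layered_blocks.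
by rewrite rb_interval_blocks //; apply/allP => _ /mapP[[] _ ->].
Qed.

(* Removing the first block: every later block of the matching lies above it,
   which shifts x and y by q^(size of the first block). *)
Lemma weight_cons (q x y : R) (b : bool) (t : seq bool) :
  weight q x y (b :: t) =
  (if b then y else x) * weight q (x * q ^+ part_size b) (y * q ^+ part_size b) t.
Proof.
rewrite !weightE /= size_map -(count_predC id t) -/(count negb t).
by case: b; rewrite /= !exprMn mulnDr !exprD -?exprM ?mul1n; ring.
Qed.

Lemma FE (n : nat) (x y q : R) :
  F n x y q =
  \sum_(k < n.+1) \sum_(t : k.-tuple bool | sumn (map part_size t) == n)
     weight q x y t.
Proof. by []. Qed.

Lemma sum_tupleS (k : nat) (f : seq bool -> R) (P : pred (seq bool)) :
  \sum_(t : k.+1.-tuple bool | P t) f t =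
  \sum_(b : bool) \sum_(t : k.-tuple bool | P (b :: t)) f (b :: t).
Proof.
rewrite pair_big_dep.
rewrite (reindex (fun p : bool * k.-tuple bool => [tuple of p.1 :: p.2])) //=.
exists (fun t : k.+1.-tuple bool => (thead t, [tuple of behead t])).
  by case=> b t _ /=; rewrite theadE; congr pair; apply: val_inj.
by move=> t _; rewrite [in RHS](tuple_eta t).
Qed.

Lemma size_le_sumn (t : seq bool) : (size t <= sumn (map part_size t))%N.
Proof. by elim: t => [|[] t IH] //=; rewrite ?add1n ?ltnS // ltnW. Qed.

Lemma F_rec (N : nat) (x y q : R) :
  F N.+2 x y q =
  x * F N.+1 (x * q) (y * q) q + y * F N (x * q ^+ 2) (y * q ^+ 2) q.
Proof.
rewrite !FE big_ord_recl big_pred0 ?add0r; last by move=> t; rewrite tuple0.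
under eq_bigr => k _ do
  rewrite (@sum_tupleS k (weight q x y) (fun t => sumn (map part_size t) == N.+2)%N)
          big_bool /=.
rewrite big_split /= addrC !mulr_sumr; congr (_ + _).
  apply: eq_bigr => k _; rewrite mulr_sumr.
  by apply: eq_bigr => t _; rewrite weight_cons expr1.
rewrite big_ord_recr /= [X in _ + X]big_pred0 ?addr0; last first.
  move=> t; apply/negbTE; rewrite eqn_add2l neq_ltn.
  by have := size_le_sumn t; rewrite size_tuple => ->; rewrite orbT.
apply: eq_bigr => k _; rewrite mulr_sumr.
by apply: eq_big => [t|t _]; rewrite ?eqn_add2l // weight_cons.
Qed.

Fixpoint gauss (q : R) (n k : nat) : R :=
  match n, k with
  | _, 0 => 1
  | 0, _.+1 => 0
  | n'.+1, k'.+1 => gauss q n' k + q ^+ (n' - k') * gauss q n' k'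
  end.

Lemma gauss_gt (q : R) (n k : nat) : (n < k)%N -> gauss q n k = 0.
Proof. by elim: n k => [|n IH] [|k] //= h; rewrite !IH ?mulr0 ?addr0 // ltnW. Qed.

Lemma gauss_n0 (q : R) (n : nat) : gauss q n 0 = 1.
Proof. by case: n. Qed.

Lemma gaussS (q : R) (n k : nat) :
  gauss q n.+1 k.+1 = gauss q n k.+1 + q ^+ (n - k) * gauss q n k.
Proof. by []. Qed.

Variable q : R.

Definition term (g : R) (n m k : nat) (x y : R) : R :=
  x ^+ (n - k) * y ^+ k * q ^+ ('C(n, 2) + 'C(k, 2)) * g
    * F (m - k) (x * q ^+ (n + k)) (y * q ^+ (n + k)) q.

Lemma termDg (g1 g2 : R) (n m k : nat) (x y : R) :
  term (g1 + g2) n m k x y = term g1 n m k x y + term g2 n m k x y.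
Proof. by rewrite /term mulrDr mulrDl. Qed.

Lemma term0g (n m k : nat) (x y : R) : term 0 n m k x y = 0.
Proof. by rewrite /term mulr0 mul0r. Qed.

Lemma term_shift_x (g : R) (n m k : nat) (x y : R) : (k <= n)%N ->
  x * term g n m.+1 k (x * q) (y * q) = term g n.+1 m.+1 k x y.
Proof.
move=> hk; rewrite /term -!mulrA -!exprS -addSn.
set f := F _ _ _ _; rewrite binS2.
have -> : (n.+1 - k = (n - k).+1)%N by lia.
have -> : ('C(n, 2) + n + 'C(k, 2) = n - k + k + ('C(n, 2) + 'C(k, 2)))%N by lia.
by rewrite !exprS !exprMn !exprD; ring.
Qed.

Lemma term_shift_y (g : R) (n m k : nat) (x y : R) : (k <= n)%N ->
  y * term g n m k (x * q ^+ 2) (y * q ^+ 2) =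
  term (q ^+ (n - k) * g) n.+1 m.+1 k.+1 x y.
Proof.
move=> hk; rewrite /term -[x * _ * _]mulrA -[y * _ * _]mulrA -!exprD subSS.
have -> : (2 + (n + k) = n.+1 + k.+1)%N by lia.
set f := F _ _ _ _; rewrite !binS2.
have -> : ('C(n, 2) + n + ('C(k, 2) + k) = 'C(n, 2) + 'C(k, 2) + (n - k) + k + k)%N.
  by lia.
by rewrite !exprMn !exprD exprS; ring.
Qed.

(* Iterating the recursion n times expands F_{n+m} over the Gaussian
   binomials G(n,k); the condition n <= m keeps every index m - k genuine. *)
Lemma F_expansion (n m : nat) (x y : R) : (n <= m)%N ->
  F (n + m) x y q = \sum_(k < n.+1) term (gauss q n k) n m k x y.
Proof.
elim: n m x y => [|n IH] m x y hnm.
  by rewrite big_ord1 /term /= !expr0 !mulr1 !mul1r subn0.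
case: m hnm => [|m] // hnm.
rewrite addSn addnS F_rec -addnS (IH m.+1) ?leqW // (IH m) // !mulr_sumr.
rewrite [X in X + _](eq_bigr (fun k : 'I_n.+1 => term (gauss q n k) n.+1 m.+1 k x y));
  last by move=> k _; rewrite term_shift_x // -ltnS.
rewrite [X in _ + X](eq_bigr (fun k : 'I_n.+1 =>
           term (q ^+ (n - k) * gauss q n k) n.+1 m.+1 k.+1 x y));
  last by move=> k _; rewrite term_shift_y // -ltnS.
rewrite [RHS]big_ord_recl.
under [X in _ = _ + X]eq_bigr => k _ do rewrite lift0 gaussS termDg.
rewrite big_split /= addrA; congr (_ + _).
rewrite big_ord_recl [in RHS]big_ord_recr /= gauss_n0 gauss_gt // term0g addr0.
by congr (_ + _); apply: eq_bigr.
Qed.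
End Recursion.

Section ProductFormula.
Context {R : comPzRingType}.
Variable q : R.

Definition qden (k : nat) : R := \prod_(1 <= i < k.+1) (q ^+ i - 1).
Definition qnum (n k : nat) : R := \prod_(1 <= i < k.+1) (q ^+ (n - i + 1) - 1).

Lemma qdenS (k : nat) : qden k.+1 = qden k * (q ^+ k.+1 - 1).
Proof. by rewrite /qden big_nat_recr. Qed.

Lemma qnumSS (n k : nat) : qnum n.+1 k.+1 = (q ^+ n.+1 - 1) * qnum n k.
Proof. by rewrite /qnum big_nat_recl // subn1 addn1. Qed.

Lemma qnumS (n k : nat) : (k < n)%N -> qnum n k.+1 = qnum n k * (q ^+ (n - k) - 1).
Proof. by move=> hk; rewrite /qnum big_nat_recr //=; congr (_ * (q ^+ _ - 1)); lia. Qed.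

Lemma gauss_qden0 (n : nat) : gauss q n 0 * qden 0 = qnum n 0.
Proof. by rewrite gauss_n0 /qden /qnum !big_geq ?mul1r. Qed.

(* The q-Pascal coefficients satisfy the product formula, without division. *)
Lemma gauss_qden (n k : nat) : (k <= n)%N -> gauss q n k * qden k = qnum n k.
Proof.
elim: n k => [|n IH] [|k] hk //; [exact: gauss_qden0 | exact: gauss_qden0 |].
(* The first Pascal summand; for k = n both sides vanish. *)
have hi_part : gauss q n k.+1 * qden k.+1 = qnum n k * (q ^+ (n - k) - 1).
  have [ltkn | lenk] := ltnP k n; first by rewrite IH // qnumS.
  have -> : k = n by apply/eqP; rewrite eqn_leq -ltnS hk.
  by rewrite gauss_gt // subnn subrr !mulr0 mul0r.
rewrite gaussS mulrDl hi_part qdenS qnumSS.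
rewrite [_ * (qden k * _)]mulrA -[_ * gauss q n k * qden k]mulrA IH //.
have -> : (n.+1 = n - k + k.+1)%N by lia.
by rewrite exprD; ring.
Qed.
End ProductFormula.

Lemma qbinom_gauss (R : fieldType) (q : R) (n k : nat) :
  (forall i : nat, (0 < i <= n)%N -> q ^+ i != 1) -> (k <= n)%N ->
  qbinom n k q = gauss q n k.
Proof.
move=> hq hk.
have qden_neq0 : qden q k != 0.
  rewrite /qden prodf_seq_neq0; apply/allP => i; rewrite mem_index_iota => hi /=.
  by rewrite subr_eq0 hq //; lia.
by rewrite /qbinom prodf_div -/(qnum q n k) -/(qden q k) -gauss_qden // mulfK.
Qed.

Theorem theorem4p7 (R : fieldType) (n : nat) (x y q : R)
  (hq : forall i : nat, (0 < i <= n)%N -> q ^+ i != 1) :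
  F (2 * n) x y q =
  \sum_(k < n.+1)
     x ^+ (n - k) * y ^+ k * q ^+ ('C(n + k, 2) - n * k)
       * qbinom n k q * F (n - k) (x * q ^+ (n + k)) (y * q ^+ (n + k)) q.
Proof.
rewrite mul2n -addnn (F_expansion q n n x y (leqnn n)).
apply: eq_bigr => k _; have hk : (k <= n)%N by rewrite -ltnS.
by rewrite /term qbinom_gauss // binD2 addnK.
Qed.
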